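(* Let $\tilde L$ be a minimum-size counterexample. Then for every doubly irreducible element $x$ of $\tilde L$ there exists a doubly reducible element $y$ of $\tilde L$ with $x<y$.
   Context: For a poset $P$, $x$ upper covers $y$ (and $y$ lower covers $x$) if $y<x$ with nothing strictly between. Join-irreducible: upper covers exactly one element; meet-irreducible: lower covers exactly one element; doubly irreducible: both. Join-reducible: upper covers more than one element; meet-reducible: lower covers more than one element; doubly reducible: both. For $x\in P$, ${\uparrow}x=\{y: x\le y\}$. A counterexample is a finite lattice $L$ with $|L|>1$ in which every join-irreducible $j$ satisfies $|{\uparrow}j|>|L|/2$; a minimum-size counterexample is a counterexample $\tilde L$ such that no counterexample has fewer elements. *)

From HB Require Import structures.
From mathcomp Require Import all_boot all_order.
Set Implicit Arguments. Unset Strict Implicit. Unset Printing Implicit Defensive.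
Import Order.TTheory.
Local Open Scope order_scope.

Section Defs.
Context {d : Order.disp_t} {P : finPOrderType d}.

Definition ucovers (x y : P) : bool :=
  (y < x) && [forall z : P, ~~ ((y < z) && (z < x))].

Definition join_irr (x : P) : bool := #|[set y | ucovers x y]| == 1%N.
Definition meet_irr (x : P) : bool := #|[set y | ucovers y x]| == 1%N.
Definition doubly_irr (x : P) : bool := join_irr x && meet_irr x.

Definition join_red (x : P) : bool := (1 < #|[set y | ucovers x y]|)%N.
Definition meet_red (x : P) : bool := (1 < #|[set y | ucovers y x]|)%N.
Definition doubly_red (x : P) : bool := join_red x && meet_red x.

Definition upset (x : P) : {set P} := [set y | x <= y].
End Defs.

Definition counterexample {d : Order.disp_t} (L : finLatticeType d) : Prop :=
  (1 < #|L|)%N /\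
  forall j : L, join_irr j -> (#|L| < 2 * #|upset j|)%N.

Definition min_counterexample {d : Order.disp_t} (L : finLatticeType d) : Prop :=
  counterexample L /\
  forall (d' : Order.disp_t) (L' : finLatticeType d'),
    counterexample L' -> (#|L| <= #|L'|)%N.

From HB Require Import structures.
From mathcomp Require Import all_boot all_order.
From mathcomp Require Import zify.
Set Implicit Arguments. Unset Strict Implicit. Unset Printing Implicit Defensive.
Import Order.TTheory.
Local Open Scope order_scope.

(* Suppose x is doubly irreducible but no doubly reducible element lies above
   it, and let y0 be the least element above x that is not meet-irreducible
   (the top is one such element).  Every u in the gap {u >= x | ~ u >= y0} is
   meet-irreducible, hence u < y0.  If y0 is the top, an element j minimal
   among those not below a lower cover c >= x of y0 is join-irreducible, and
   its up-set misses the lower cover of x and every element of up(x) except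
   y0; so |up j| + |up x| <= |L|, which contradicts the counterexample
   property of j and x.  Otherwise y0 is meet-reducible, hence
   join-irreducible, and deleting the gap leaves a lattice (a join falling
   into the gap becomes y0) which is a smaller counterexample: its
   join-irreducibles either lie below y0 or are join-irreducible in L with
   the same up-set. *)

Section FinPOrder.
Context {d : Order.disp_t} {P : finPOrderType d}.
Implicit Types (x y z : P) (Q : pred P).

Lemma ucoversP x y :
  reflect (y < x /\ forall z, y < z -> z < x -> False) (ucovers x y).
Proof.
apply: (iffP andP) => [[yx /forallP nz]|[yx nz]]; split=> //.
  by move=> z yz zx; have := nz z; rewrite yz zx.
by apply/forallP=> z; apply/negP=> /andP[yz zx]; exact: nz z yz zx.
Qed.

Lemma lt_ind (C : P -> Prop) :
  (forall x, (forall y, y < x -> C y) -> C x) -> forall x, C x.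
Proof.
move=> IH; suff Cn n x : (#|[set y | (y < x)%O]| <= n)%N -> C x.
  by move=> x; exact: Cn.
elim: n x => [|n IHn] x hx; apply: IH => y yx.
  by move: hx; rewrite leqn0 cards_eq0 => /eqP/setP/(_ y); rewrite !inE yx.
apply: IHn; rewrite -ltnS; apply: leq_trans hx; apply: proper_card.
apply/properP; split; last by exists y; rewrite !inE ?ltxx.
by apply/subsetP=> z; rewrite !inE => zy; exact: lt_trans zy yx.
Qed.

Lemma exists_minimal_below Q x :
  Q x -> exists y, [/\ Q y, y <= x & forall z, z < y -> ~~ Q z].
Proof.
elim/lt_ind: x => x IH Qx.
have [/existsP[z /andP[zx Qz]]|none_below] := boolP [exists z, (z < x) && Q z].
  have [y [Qy yz ymin]] := IH z zx Qz.
  by exists y; split=> //; exact: le_trans yz (ltW zx).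
exists x; split=> // z zx; apply: contra none_below => Qz.
by apply/existsP; exists z; rewrite zx.
Qed.

End FinPOrder.

Lemma exists_maximal_above {d} {P : finPOrderType d} (Q : pred P) x :
  Q x -> exists y, [/\ Q y, x <= y & forall z, y < z -> ~~ Q z].
Proof. exact: (@exists_minimal_below _ P^d). Qed.

Section Covers.
Context {d : Order.disp_t} {P : finPOrderType d}.
Implicit Types (z u v c : P).

Lemma exists_ucover_above u v : u < v -> exists2 c, ucovers c u & c <= v.
Proof.
move=> uv; have [c [uc cv cmin]] := exists_minimal_below (Q := fun z => u < z) uv.
exists c => //; apply/ucoversP; split=> // z uz zc.
by have := cmin z zc; rewrite uz.
Qed.

Lemma exists_ucover_below u v : u < v -> exists2 c, ucovers v c & u <= c.
Proof.
move=> uv; have [c [cv uc cmax]] := exists_maximal_above (Q := fun z => z < v) uv.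
exists c => //; apply/ucoversP; split=> // z cz zv.
by have := cmax z cz; rewrite zv.
Qed.

Lemma ucovers_between u v z : ucovers v u -> u <= z -> z <= v -> z = u \/ z = v.
Proof.
move=> /ucoversP[uv nz] uz zv.
have [->|zu] := eqVneq z u; first by left.
have [->|zv'] := eqVneq z v; first by right.
by exfalso; apply: (nz z); rewrite lt_neqAle ?uz ?zv ?andbT // eq_sym.
Qed.

End Covers.

Section FinLattice.
Context {d : Order.disp_t} {L : finLatticeType d}.
Implicit Types (x y z u v w c j : L).

Lemma join_irr_exists_lt j : join_irr j -> exists a, a < j.
Proof.
move=> /cards1P[a lower_j]; exists a.
have : a \in [set y | ucovers j y] by rewrite lower_j set11.
by rewrite inE => /ucoversP[].
Qed.

Lemma meet_irr_ltI z u v : meet_irr z -> z < u -> z < v -> z < u `&` v.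
Proof.
move=> /cards1P[c upper_z] zu zv.
have cover_eq w : ucovers w z -> w = c.
  by move=> wz; apply/set1P; rewrite -upper_z inE.
have [c1 /[dup] /cover_eq -> zc c1u] := exists_ucover_above zu.
have [c2 /cover_eq -> c2v] := exists_ucover_above zv.
have /ucoversP[zc' _] := zc.
by apply: lt_le_trans zc' _; rewrite lexI c1u c2v.
Qed.

Lemma meet_irr_meet u v : meet_irr (u `&` v) -> (u <= v) || (v <= u).
Proof.
move=> mi; apply: contraT; rewrite negb_or => /andP[nuv nvu].
have := @meet_irr_ltI _ u v mi.
by rewrite !lt_neqAle eq_meetl eq_meetr nuv nvu leIl leIr eqxx => /(_ isT isT).
Qed.

Lemma no_ucover_top y : (forall z, ~~ ucovers z y) -> forall w, w <= y.
Proof.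
move=> no_cover w; rewrite -eq_joinl; apply: contraT => ne.
have yw : y < y `|` w by rewrite lt_neqAle eq_sym ne leUl.
have [c yc _] := exists_ucover_above yw.
by have := no_cover c; rewrite yc.
Qed.

Lemma meet_irrVred y z : ucovers z y -> meet_irr y || meet_red y.
Proof.
move=> zy; rewrite /meet_irr /meet_red eq_sym -leq_eqVlt card_gt0.
by apply/set0Pn; exists z; rewrite inE.
Qed.

Lemma join_irrVred j c : ucovers j c -> join_irr j || join_red j.
Proof.
move=> jc; rewrite /join_irr /join_red eq_sym -leq_eqVlt card_gt0.
by apply/set0Pn; exists c; rewrite inE.
Qed.

Lemma not_le_minimal_join_irr c j :
  ~~ (j <= c) -> (forall z, z < j -> z <= c) -> join_irr j.
Proof.
move=> jc below_le.
have jcj : j `&` c < j by rewrite lt_neqAle eq_meetl jc leIl.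
have [u ju _] := exists_ucover_below jcj.
apply/cards1P; exists u; apply/setP => w; rewrite !inE.
apply/idP/eqP => [jw|->//].
have /ucoversP[wj _] := jw; have /ucoversP[uj _] := ju.
have wuj : w `|` u <= j by rewrite leUx !ltW.
have wu_le_c : w `|` u <= c by rewrite leUx !below_le.
have [wu_w|wu_j] := ucovers_between jw (leUl w u) wuj; last first.
  by move: jc; rewrite -wu_j wu_le_c.
have [wu_u|wu_j] := ucovers_between ju (leUr u w) wuj; last first.
  by move: jc; rewrite -wu_j wu_le_c.
by rewrite -wu_w wu_u.
Qed.

End FinLattice.

Lemma exists_least_not_meet_irr {d} {L : finLatticeType d} (x : L) :
  exists y0, [/\ x <= y0, ~~ meet_irr y0
               & forall w, x <= w -> ~~ meet_irr w -> y0 <= w].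
Proof.
have [m [_ xm m_max]] := exists_maximal_above (Q := predT) (isT : predT x).
have m_nmi : ~~ meet_irr m.
  rewrite /meet_irr; suff -> : [set y | ucovers y m] = set0 by rewrite cards0.
  by apply/setP=> y; rewrite !inE; apply/negP=> /ucoversP[my _]; have := m_max y my.
pose Q w := (x <= w) && ~~ meet_irr w.
have [y0 [/andP[xy0 y0_nmi] _ y0_min]] := exists_minimal_below (Q := Q) (x := m)
  (introT andP (conj xm m_nmi)).
exists y0; split=> // w xw w_nmi; apply: contraT => y0w.
have yw_mi : meet_irr (y0 `&` w).
  have := y0_min (y0 `&` w).
  by rewrite lt_neqAle eq_meetl y0w leIl /Q lexI xy0 xw negbK; apply.
have wy0 : w < y0.
  by move: (meet_irr_meet yw_mi); rewrite (negbTE y0w) lt_leAnge y0w andbT.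
by have := y0_min w wy0; rewrite /Q xw w_nmi.
Qed.

Section RemoveSet.
Variables (d : Order.disp_t) (L : finLatticeType d) (S : {set L}) (y0 : L).
Hypothesis meet_notin : forall u v, u \notin S -> v \notin S -> u `&` v \notin S.
Hypothesis y0_notin : y0 \notin S.
Hypothesis join_repl :
  forall s, s \in S -> s <= y0 /\ forall w, w \notin S -> s <= w -> y0 <= w.

(* The hypotheses are mentioned so that they become parameters of the type,
   which its lattice structure depends on. *)
Definition removed : Type :=
  let _ := (meet_notin, y0_notin, join_repl) in {u : L | u \notin S}.
HB.instance Definition _ := Finite.copy removed {u : L | u \notin S}.
HB.instance Definition _ := SubType.copy removed {u : L | u \notin S}.
HB.instance Definition _ := [SubChoice_isSubPOrder of removed by <: with d].

Definition removed_meet (u v : removed) : removed :=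
  exist _ (val u `&` val v) (meet_notin (valP u) (valP v)).
Definition removed_join (u v : removed) : removed :=
  odflt (exist _ y0 y0_notin) (insub (val u `|` val v)).

Lemma removed_lexI (x y z : removed) :
  (x <= removed_meet y z) = (x <= y) && (x <= z).
Proof. by rewrite -!Order.le_val /= lexI. Qed.

Lemma removed_leUx (x y z : removed) :
  (removed_join x y <= z) = (x <= z) && (y <= z).
Proof.
rewrite -!Order.le_val /removed_join; case: insubP => [w _ -> //|] /=; first by rewrite leUx.
move/negPn => /join_repl[xy_y0 y0_least]; apply/idP/andP => [y0z|[xz yz]].
  by move: (le_trans xy_y0 y0z); rewrite leUx => /andP.
by apply: y0_least (valP z) _; rewrite leUx xz yz.
Qed.

HB.instance Definition _ :=
  Order.POrder_MeetJoin_isLattice.Build d removed removed_lexI removed_leUx.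

Lemma card_removed : #|(removed : finType)| = #|~: S|.
Proof.
rewrite -cardsT -(card_imset _ val_inj); apply: eq_card => w; rewrite !inE.
apply/imsetP/idP => [[u _ ->]|wS]; first exact: (valP u).
by exists (exist _ w wS).
Qed.

Lemma card_upset_removed (j : removed) : #|upset j| = #|upset (val j) :\: S|.
Proof.
rewrite -(card_imset _ val_inj); apply: eq_card => w; rewrite !inE.
apply/imsetP/andP => [[u]|[wS jw]].
  by rewrite inE -Order.le_val => ju ->; split=> //; exact: (valP u).
by exists (exist _ w wS); rewrite // inE -Order.le_val.
Qed.

Lemma ucovers_val (j u : removed) : ucovers (val j) (val u) -> ucovers j u.
Proof.
move=> /ucoversP[uj no_between]; apply/ucoversP; split=> // z uz zj.
exact: no_between (val z) uz zj.
Qed.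

Lemma join_irr_val (j : removed) :
  (forall u : L, ucovers (val j) u -> u \notin S) ->
  (forall u : removed, ucovers j u -> ucovers (val j) (val u)) ->
  join_irr j -> join_irr (val j).
Proof.
move=> lower_notin lower_val; rewrite /join_irr.
suff -> : [set u : L | ucovers (val j) u] = val @: [set u : removed | ucovers j u].
  by rewrite card_imset //; exact: val_inj.
apply/setP=> u; rewrite inE; apply/idP/imsetP => [ju|[w]].
  by exists (exist _ u (lower_notin u ju)); rewrite // inE ucovers_val.
by rewrite inE => /lower_val ju ->.
Qed.

End RemoveSet.

Definition gap {d} {L : finLatticeType d} (x y : L) : {set L} := upset x :\: upset y.

Section Gap.
Variables (d : Order.disp_t) (L : finLatticeType d) (x y0 : L).
Hypothesis x_le_y0 : x <= y0.
Hypothesis y0_least : forall w, x <= w -> ~~ meet_irr w -> y0 <= w.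

Lemma mem_gap u : (u \in gap x y0) = (x <= u) && ~~ (y0 <= u).
Proof. by rewrite !inE andbC. Qed.

Lemma gap_notin_ge v : x <= v -> v \notin gap x y0 -> y0 <= v.
Proof. by rewrite mem_gap => ->; rewrite negbK. Qed.

Lemma y0_notin_gap : y0 \notin gap x y0.
Proof. by rewrite mem_gap lexx andbF. Qed.

Lemma gap_meet_irr u : u \in gap x y0 -> meet_irr u.
Proof. by rewrite mem_gap => /andP[xu]; exact: contraR (y0_least xu). Qed.

Lemma gap_lt_y0 u : u \in gap x y0 -> u < y0.
Proof.
move=> /[dup] uS; rewrite mem_gap => /andP[xu ny0u].
have uy_S : u `&` y0 \in gap x y0.
  rewrite mem_gap lexI xu x_le_y0; apply: contra ny0u => y0_uy.
  exact: le_trans y0_uy (leIl _ _).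
have := meet_irr_meet (gap_meet_irr uy_S); rewrite (negbTE ny0u) orbF => uy0.
by rewrite lt_leAnge uy0 ny0u.
Qed.

Lemma meet_notin_gap u v :
  u \notin gap x y0 -> v \notin gap x y0 -> u `&` v \notin gap x y0.
Proof.
move=> uS vS; apply/negP; rewrite mem_gap lexI => /andP[/andP[xu xv]].
by rewrite lexI (gap_notin_ge xu uS) (gap_notin_ge xv vS).
Qed.

Lemma gap_join_least s : s \in gap x y0 ->
  s <= y0 /\ forall w, w \notin gap x y0 -> s <= w -> y0 <= w.
Proof.
move=> sS; split=> [|w wS sw]; first exact/ltW/gap_lt_y0.
apply: gap_notin_ge wS; move: sS; rewrite mem_gap => /andP[xs _].
exact: le_trans sw.
Qed.

Lemma gap_le_lower_cover c s :
  ucovers y0 c -> x <= c -> s \in gap x y0 -> s <= c.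
Proof.
move=> y0c xc sS; have /ucoversP[cy0 _] := y0c.
have sc_S : s `&` c \in gap x y0.
  move: sS; rewrite !mem_gap lexI xc andbT => /andP[-> _] /=.
  apply: contraTN cy0 => y0sc.
  by rewrite le_gtF // (le_trans y0sc (leIr _ _)).
case/orP: (meet_irr_meet (gap_meet_irr sc_S)) => [//|cs].
have s_y0 := gap_lt_y0 sS.
have [->//|e] := ucovers_between y0c cs (ltW s_y0).
by rewrite e ltxx in s_y0.
Qed.

Lemma exists_join_irr_small_upset : join_irr x -> x < y0 -> (forall w, w <= y0) ->
  exists2 j : L, join_irr j & (#|upset j| + #|upset x| <= #|L|)%N.
Proof.
move=> /join_irr_exists_lt[a ax] xy0 y0_top.
have [c y0c xc] := exists_ucover_below xy0.
have /ucoversP[cy0 _] := y0c.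
have [j [jc _ j_min]] :=
  exists_minimal_below (Q := fun z => ~~ (z <= c)) (negbT (lt_geF cy0)).
have below_le z : z < j -> z <= c by move/j_min; rewrite negbK.
exists j; first exact: not_le_minimal_join_irr jc below_le.
pose D := a |: (upset x :\ y0).
have upset_j_D : upset j \subset ~: D.
  apply/subsetP => w; rewrite !inE => jw.
  apply: contra jc => /orP[/eqP wa | /andP[w_y0 xw]].
    by rewrite wa in jw; exact: le_trans jw (le_trans (ltW ax) xc).
  have wS : w \in gap x y0.
    rewrite mem_gap xw; apply: contra w_y0 => y0w.
    by apply/eqP/le_anti; rewrite y0w y0_top.
  exact: le_trans jw (gap_le_lower_cover y0c xc wS).
have card_D : #|D| = #|upset x|.
  by rewrite cardsU1 [#|upset x|](cardsD1 y0) !inE (lt_geF ax) andbF (ltW xy0).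
by rewrite -card_D -(cardsC D) addnC leq_add2l subset_leq_card.
Qed.

Local Notation L' := (removed meet_notin_gap y0_notin_gap gap_join_least).

Lemma card_gap_removed_lt : x < y0 -> (#|(L' : finType)| < #|L|)%N.
Proof.
move=> xy0; rewrite card_removed -(cardsC (gap x y0)) -[X in (X < _)%N]add0n.
by rewrite ltn_add2r card_gt0; apply/set0Pn; exists x; rewrite mem_gap lexx lt_geF.
Qed.

Lemma join_irr_gap_removed (j : L') :
  ~~ (val j <= y0) -> join_irr j -> join_irr (val j).
Proof.
move=> njy0; have y0_lt_j z : z \in gap x y0 -> z <= val j -> y0 < val j.
  rewrite mem_gap => /andP[xz _] zj.
  by rewrite lt_leAnge njy0 andbT (gap_notin_ge (le_trans xz zj) (valP j)).
apply: join_irr_val => [u /ucoversP[uj no_between]|u /ucoversP[uj no_between]].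
  apply/negP => uS; apply: (no_between y0 (gap_lt_y0 uS)).
  exact: y0_lt_j uS (ltW uj).
apply/ucoversP; split=> [|z uz zj]; first by rewrite lt_val.
have [zS|zS] := boolP (z \in gap x y0).
  apply: (no_between (exist _ y0 y0_notin_gap)); rewrite -lt_val /=.
    exact: lt_trans uz (gap_lt_y0 zS).
  exact: y0_lt_j zS (ltW zj).
by apply: (no_between (exist _ z zS)); rewrite -lt_val.
Qed.

Lemma counterexample_gap_removed :
  counterexample L -> join_irr x -> join_irr y0 -> counterexample L'.
Proof.
move=> [_ Lcex] /join_irr_exists_lt[a ax] y0_ji.
have le_compl : (#|~: gap x y0| <= #|L|)%N := max_card _.
split.
  rewrite card_removed; apply: (@leq_trans #|[set y0; a]|).
    by rewrite cards2 (gt_eqF (lt_le_trans ax x_le_y0)).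
  apply/subset_leq_card/subsetP => w /set2P[]->; rewrite inE ?y0_notin_gap //.
  by rewrite mem_gap (lt_geF ax).
move=> j j_ji; rewrite card_removed card_upset_removed.
have [jy0|njy0] := boolP (val j <= y0).
  have sub : upset y0 \subset upset (val j) :\: gap x y0.
    by apply/subsetP => w; rewrite !inE => y0w; rewrite y0w (le_trans jy0 y0w).
  by have := Lcex y0 y0_ji; have := subset_leq_card sub; lia.
have -> : upset (val j) :\: gap x y0 = upset (val j).
  apply/setP=> w; rewrite in_setD andb_idl // inE => jw.
  by apply: contra njy0 => wS; exact: le_trans jw (ltW (gap_lt_y0 wS)).
by have := Lcex _ (join_irr_gap_removed njy0 j_ji); lia.
Qed.

End Gap.

Theorem corollary2p8 (d : Order.disp_t) (L : finLatticeType d) :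
  min_counterexample L ->
  forall x : L, doubly_irr x -> exists y : L, doubly_red y /\ x < y.
Proof.
move=> [Lcex L_min] x /andP[x_ji x_mi].
have [/existsP[y /andP[y_red xy]]|no_red] := boolP [exists y, doubly_red y && (x < y)].
  by exists y.
exfalso; have [y0 [xy0 y0_nmi y0_least]] := exists_least_not_meet_irr x.
have x_lt_y0 : x < y0 by rewrite lt_neqAle xy0 andbT; apply: contraNneq y0_nmi => <-.
have [/existsP[z y0z]|/existsPn no_cover] := boolP [exists z, ucovers z y0]; last first.
  have [j j_ji] := exists_join_irr_small_upset xy0 y0_least x_ji x_lt_y0 (no_ucover_top no_cover).
  by have := Lcex.2 j j_ji; have := Lcex.2 x x_ji; lia.
have y0_mr : meet_red y0 by move: (meet_irrVred y0z); rewrite (negbTE y0_nmi).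
have y0_ji : join_irr y0.
  have [c y0c _] := exists_ucover_below x_lt_y0.
  move/existsPn: no_red => /(_ y0); rewrite /doubly_red y0_mr x_lt_y0 !andbT.
  by move/negbTE => y0_njr; move: (join_irrVred y0c); rewrite y0_njr orbF.
have := L_min _ _ (counterexample_gap_removed xy0 y0_least Lcex x_ji y0_ji).
by rewrite leqNgt card_gap_removed_lt.
Qed.
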